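(* Let $N\ge 1$ and let $-\infty<a_i\le b_i<\infty$ for $i=1,\dots,N$, with $r_i=(b_i-a_i)/2>0$ for all $i$. Let $\Theta=\prod_{i=1}^N[a_i,b_i]$ and $T(y)=\sum_{i=1}^N y_i$. Let $p$ be a sampling design on subsets of $\{1,\dots,N\}$ with inclusion probabilities $\pi_i=\mathbb P_p(i\in S)>0$ for all $i$. Then for any unbiased estimator $\delta$, \[ \sup_{y\in\Theta}R(\delta,p;y)\;\ge\;\sum_{i=1}^N r_i^2\,\frac{1-\pi_i}{\pi_i}. \]
   Context: A sampling design is a probability distribution $p$ on the subsets $s\subseteq\{1,\dots,N\}$; $S$ denotes the random sample drawn from $p$, $\mathbb P_p$ and $\mathbb E_p$ denote probability and expectation with respect to $p$. An estimator $\delta$ is a collection of measurable functions $\delta_s:\Theta_s\to\mathbb R$, one for each subset $s$, where $\Theta_s=\prod_{i\in s}[a_i,b_i]$ is the projection of $\Theta$ onto the coordinates in $s$; for $y\in\Theta$ write $y_s=(y_i)_{i\in s}$. The estimator is unbiased (for design $p$) if $\mathbb E_p[\delta_S(y_S)]=T(y)$ for all $y\in\Theta$. The risk is $R(\delta,p;y)=\mathbb E_p[(\delta_S(y_S)-T(y))^2]$. *)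

From HB Require Import structures.
From mathcomp Require Import all_boot all_order all_algebra.
From mathcomp Require Import classical_sets reals ereal.
Set Implicit Arguments. Unset Strict Implicit. Unset Printing Implicit Defensive.
Import Order.TTheory GRing.Theory Num.Theory.
Local Open Scope ring_scope.

Section Sampling.
Variables (R : realType) (N : nat).

Definition is_design (p : {ffun {set 'I_N} -> R}) : Prop :=
  (forall s, 0 <= p s) /\ \sum_(s : {set 'I_N}) p s = 1.

Definition incl_prob (p : {ffun {set 'I_N} -> R}) (i : 'I_N) : R :=
  \sum_(s : {set 'I_N} | i \in s) p s.

Definition inTheta (a b : 'I_N -> R) (y : 'I_N -> R) : Prop :=
  forall i, a i <= y i <= b i.

Definition total (y : 'I_N -> R) : R := \sum_i y i.

(* An estimator: delta s is a function of y_s only, i.e. on Theta its value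
   depends only on the coordinates in s. *)
Definition is_estimator (a b : 'I_N -> R)
  (delta : {set 'I_N} -> ('I_N -> R) -> R) : Prop :=
  forall (s : {set 'I_N}) y z, inTheta a b y -> inTheta a b z ->
    (forall i, i \in s -> y i = z i) -> delta s y = delta s z.

Definition expect_est (p : {ffun {set 'I_N} -> R})
  (delta : {set 'I_N} -> ('I_N -> R) -> R) (y : 'I_N -> R) : R :=
  \sum_(s : {set 'I_N}) p s * delta s y.

Definition unbiased (a b : 'I_N -> R) (p : {ffun {set 'I_N} -> R})
  (delta : {set 'I_N} -> ('I_N -> R) -> R) : Prop :=
  forall y, inTheta a b y -> expect_est p delta y = total y.

Definition risk (p : {ffun {set 'I_N} -> R})
  (delta : {set 'I_N} -> ('I_N -> R) -> R) (y : 'I_N -> R) : R :=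
  \sum_(s : {set 'I_N}) p s * (delta s y - total y) ^+ 2.

End Sampling.

(* Average the risk over the 2^N vertices y_e = c + e r (e in {-1,1}^N) of
   Theta.  For a fixed sample s, the signs e_i are orthonormal functions of e,
   so by Bessel the mean square of the error delta_s(y_e) - T(y_e) dominates the
   sum over i of its squared coefficients g_s(i) on e_i.  Since delta_s does not
   see the coordinates outside s, g_s(i) = -r_i whenever i is not in s, and
   unbiasedness makes g_S(i) centred under p.  A centred variable equal to -r_i
   off an event of probability pi_i has second moment at least
   r_i^2 (1 - pi_i) / pi_i (Cauchy-Schwarz on the event); summing over i bounds
   the average risk, hence the risk at some vertex. *)

From Pilot Require Import Defs.
From HB Require Import structures.
From mathcomp Require Import all_boot all_order all_algebra.
From mathcomp Require Import classical_sets reals ereal.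
From mathcomp Require Import ring lra.
Import Order.TTheory GRing.Theory Num.Theory.
Set Implicit Arguments. Unset Strict Implicit.
Local Open Scope ring_scope.

Section FiniteSums.
Variables (R : realFieldType) (I : finType).

Lemma sum_kronecker (i : I) (F : I -> R) : \sum_j (i == j)%:R * F j = F i.
Proof.
rewrite (bigD1 i) //= eqxx mul1r big1 ?addr0 // => j.
by rewrite eq_sym => /negbTE ->; rewrite mul0r.
Qed.

Lemma sqr_wsum_le (P : pred I) (w x : I -> R) :
  (forall i, 0 <= w i) -> 0 < \sum_(i | P i) w i ->
  (\sum_(i | P i) w i * x i) ^+ 2 / \sum_(i | P i) w i
  <= \sum_(i | P i) w i * x i ^+ 2.
Proof.
set W := \sum_(i | P i) w i; set S := \sum_(i | P i) w i * x i.
set Q := \sum_(i | P i) w i * x i ^+ 2 => w_ge0 W_gt0.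
have expand m : \sum_(i | P i) w i * (x i - m) ^+ 2 = Q - 2 * m * S + m ^+ 2 * W.
  rewrite /Q /S /W !mulr_sumr -sumrB -big_split /=; apply: eq_bigr => i _; ring.
have : 0 <= \sum_(i | P i) w i * (x i - S / W) ^+ 2.
  by apply: sumr_ge0 => i _; rewrite mulr_ge0 ?sqr_ge0.
rewrite expand; have -> : Q - 2 * (S / W) * S + (S / W) ^+ 2 * W = Q - S ^+ 2 / W.
  by field; rewrite gt_eqF.
by rewrite subr_ge0.
Qed.

Lemma centered_second_moment_ge (A : pred I) (p x : I -> R) (rho : R) :
  (forall i, 0 <= p i) -> \sum_i p i = 1 -> 0 < \sum_(i | A i) p i ->
  \sum_i p i * x i = 0 -> (forall i, ~~ A i -> x i = - rho) ->
  rho ^+ 2 * ((1 - \sum_(i | A i) p i) / \sum_(i | A i) p i)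
  <= \sum_i p i * x i ^+ 2.
Proof.
set pi := \sum_(i | A i) p i => p_ge0 p1 pi_gt0 mean0 x_out.
have out_mass : \sum_(i | ~~ A i) p i = 1 - pi.
  by rewrite -p1 [in RHS](bigID A) /= -/pi addrC addrK.
have out_x i : ~~ A i -> p i * x i = - rho * p i by move/x_out ->; rewrite mulrC.
have out_x2 i : ~~ A i -> p i * x i ^+ 2 = rho ^+ 2 * p i.
  by move/x_out ->; rewrite sqrrN mulrC.
have in_mean : \sum_(i | A i) p i * x i = rho * (1 - pi).
  move: mean0; rewrite (bigID A) /= (eq_bigr _ out_x) -mulr_sumr out_mass.
  by move/eqP; rewrite addr_eq0 => /eqP ->; rewrite mulNr opprK.
have := sqr_wsum_le x p_ge0 pi_gt0; rewrite -/pi in_mean => CS.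
rewrite (bigID A) /= (eq_bigr _ out_x2) -mulr_sumr out_mass.
have -> : rho ^+ 2 * ((1 - pi) / pi) = (rho * (1 - pi)) ^+ 2 / pi + rho ^+ 2 * (1 - pi).
  by field; rewrite gt_eqF.
by rewrite lerD2r.
Qed.

Lemma exists_ge_mean (f : I -> R) (m : R) (i0 : I) :
  #|I|%:R * m <= \sum_i f i -> exists i, m <= f i.
Proof.
move=> mean_le; case: (boolP [exists i, m <= f i]) => [/existsP // | /existsP none].
suff : \sum_i f i < \sum_(i : I) m by rewrite sumr_const -mulr_natl ltNge mean_le.
apply: ltr_sum => [|i _]; first by apply/hasP; exists i0; rewrite ?mem_index_enum.
by rewrite ltNge; apply/negP => fi_ge; apply: none; exists i.
Qed.

End FiniteSums.

Section SignVectors.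
Variables (R : realFieldType) (N : nat).
Local Notation cube := {ffun 'I_N -> bool}.
Local Notation M := (#|{ffun 'I_N -> bool}|%:R : R).

Definition rademacher (e : cube) (i : 'I_N) : R := if e i then 1 else -1.

Definition flip (i : 'I_N) (e : cube) : cube :=
  [ffun j => if j == i then ~~ e j else e j].

Lemma card_cube_gt0 : 0 < M.
Proof. by rewrite ltr0n; apply/card_gt0P; exists [ffun => true]. Qed.

Lemma flipK i : involutive (flip i).
Proof.
move=> e; apply/ffunP => j; rewrite !ffunE.
by case: eqP => // ->; rewrite negbK.
Qed.

Lemma rademacher_flip i e : rademacher (flip i e) i = - rademacher e i.
Proof. by rewrite /rademacher ffunE eqxx; case: (e i); rewrite ?opprK. Qed.

Lemma rademacher_flip_neq i j e :
  j != i -> rademacher (flip i e) j = rademacher e j.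
Proof. by move=> /negbTE ji; rewrite /rademacher ffunE ji. Qed.

Lemma rademacher_sqr e i : rademacher e i ^+ 2 = 1.
Proof. by rewrite /rademacher; case: (e i); rewrite ?sqrrN expr1n. Qed.

Lemma sum_rademacher_flip_invariant i (f : cube -> R) :
  (forall e, f (flip i e) = f e) -> \sum_e rademacher e i * f e = 0.
Proof.
move=> f_flip; set X := \sum_e _.
suff : X = - X by lra.
rewrite {1}/X (reindex_inj (can_inj (flipK i))) -sumrN.
by apply: eq_bigr => e _; rewrite rademacher_flip f_flip mulNr.
Qed.

Lemma sum_rademacherM i j :
  \sum_e rademacher e i * rademacher e j = M * (i == j)%:R.
Proof.
have [<-|ij] := eqVneq i j.
  under eq_bigr => e _ do rewrite -expr2 rademacher_sqr.
  by rewrite sumr_const mulr1.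
rewrite mulr0; apply: sum_rademacher_flip_invariant => e.
by rewrite rademacher_flip_neq // eq_sym.
Qed.

Lemma sum_rademacher_comb_sqr (c : 'I_N -> R) :
  \sum_e (\sum_i rademacher e i * c i) ^+ 2 = M * \sum_i c i ^+ 2.
Proof.
under eq_bigr => e _ do rewrite expr2 mulr_suml.
under eq_bigr => e _ do under eq_bigr => i _ do rewrite mulr_sumr.
rewrite exchange_big /= mulr_sumr; apply: eq_bigr => i _.
rewrite exchange_big /=.
under eq_bigr => j _ do under eq_bigr => e _ do rewrite mulrACA.
under eq_bigr => j _ do rewrite -mulr_suml sum_rademacherM -mulrA.
by rewrite -mulr_sumr sum_kronecker expr2.
Qed.

Lemma rademacher_bessel (f : cube -> R) :
  \sum_i (\sum_e rademacher e i * f e) ^+ 2 <= M * \sum_e f e ^+ 2.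
Proof.
set c := fun i => \sum_e rademacher e i * f e; set C := \sum_i c i ^+ 2.
pose h e := \sum_i rademacher e i * c i.
have fh : \sum_e f e * h e = C.
  under eq_bigr do rewrite /h mulr_sumr.
  rewrite exchange_big /=; apply: eq_bigr => i _.
  under eq_bigr do rewrite mulrA [f _ * _]mulrC.
  by rewrite -mulr_suml expr2.
have : 0 <= \sum_e (M * f e - h e) ^+ 2 by apply: sumr_ge0 => e _; exact: sqr_ge0.
have -> : \sum_e (M * f e - h e) ^+ 2
          = M ^+ 2 * \sum_e f e ^+ 2 - 2 * M * \sum_e f e * h e + \sum_e h e ^+ 2.
  by rewrite !mulr_sumr -sumrB -big_split /=; apply: eq_bigr => e _; ring.
rewrite fh sum_rademacher_comb_sqr -/C.
have -> : M ^+ 2 * \sum_e f e ^+ 2 - 2 * M * C + M * C = M * (M * \sum_e f e ^+ 2 - C).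
  by ring.
by rewrite pmulr_rge0 ?card_cube_gt0 // subr_ge0.
Qed.

End SignVectors.
Arguments rademacher {R N} e i.

Section VertexPrior.
Variables (R : realType) (N : nat) (a b : 'I_N -> R).
Variables (p : {ffun {set 'I_N} -> R}) (delta : {set 'I_N} -> ('I_N -> R) -> R).
Local Notation cube := {ffun 'I_N -> bool}.
Local Notation M := (#|{ffun 'I_N -> bool}|%:R : R).

Definition radius (i : 'I_N) : R := (b i - a i) / 2.

Definition vertex (e : cube) : 'I_N -> R :=
  fun i => (a i + b i) / 2 + rademacher e i * radius i.

Hypothesis ab : forall i, a i <= b i.

Lemma vertex_inTheta e : inTheta a b (vertex e).
Proof.
move=> i; have := ab i; rewrite /vertex /radius /rademacher.
by case: (e i) => abi; apply/andP; split; lra.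
Qed.

Definition vertex_error (s : {set 'I_N}) (e : cube) : R :=
  delta s (vertex e) - Defs.total (vertex e).

Definition error_coef (s : {set 'I_N}) (i : 'I_N) : R :=
  \sum_e rademacher e i * vertex_error s e.

Lemma sum_rademacher_vertex i j :
  \sum_e rademacher e i * vertex e j = M * (i == j)%:R * radius j.
Proof.
under eq_bigr do rewrite mulrDr mulrA.
by rewrite big_split /= sum_rademacher_flip_invariant // add0r -mulr_suml
  sum_rademacherM.
Qed.

Lemma sum_rademacher_total i :
  \sum_e rademacher e i * Defs.total (vertex e) = M * radius i.
Proof.
under eq_bigr do rewrite /Defs.total mulr_sumr.
rewrite exchange_big /=; under eq_bigr do rewrite sum_rademacher_vertex -mulrA.
by rewrite -mulr_sumr sum_kronecker.
Qed.

Hypothesis delta_est : is_estimator a b delta.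

Lemma error_coef_notin (s : {set 'I_N}) i :
  i \notin s -> error_coef s i = - (M * radius i).
Proof.
move=> i_notin; rewrite /error_coef /vertex_error.
under eq_bigr do rewrite mulrBr.
rewrite sumrB sum_rademacher_total sum_rademacher_flip_invariant ?add0r // => e.
apply: delta_est; try exact: vertex_inTheta.
move=> j js; rewrite /vertex rademacher_flip_neq //.
by apply: contraNneq i_notin => <-.
Qed.

Hypothesis p_design : is_design p.
Hypothesis delta_unbiased : unbiased a b p delta.

Lemma design_mean_vertex_error e : \sum_s p s * vertex_error s e = 0.
Proof.
have [_ p1] := p_design.
under eq_bigr do rewrite mulrBr.
rewrite sumrB.
have := delta_unbiased (vertex_inTheta e); rewrite /expect_est => ->.
by rewrite -mulr_suml p1 mul1r subrr.
Qed.

Lemma design_mean_error_coef i : \sum_s p s * error_coef s i = 0.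
Proof.
under eq_bigr do rewrite /error_coef mulr_sumr.
rewrite exchange_big /= big1 // => e _.
under eq_bigr do rewrite mulrCA.
by rewrite -mulr_sumr design_mean_vertex_error mulr0.
Qed.

Hypothesis incl_prob_gt0 : forall i, 0 < incl_prob p i.

Lemma sum_vertex_risk_ge :
  M * \sum_i radius i ^+ 2 * ((1 - incl_prob p i) / incl_prob p i)
  <= \sum_e risk p delta (vertex e).
Proof.
have [p_ge0 p1] := p_design.
rewrite -(ler_pM2l (card_cube_gt0 R N)) /risk exchange_big /=.
rewrite [in X in _ <= X]mulr_sumr.
under [X in _ <= X]eq_bigr do rewrite -mulr_sumr mulrCA.
apply: le_trans (_ : \sum_s p s * \sum_i error_coef s i ^+ 2 <= _); last first.
  by apply: ler_sum => s _; rewrite ler_wpM2l //; apply: rademacher_bessel.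
under [X in _ <= X]eq_bigr do rewrite mulr_sumr.
rewrite exchange_big /= mulrA mulr_sumr; apply: ler_sum => i _.
rewrite mulrA -expr2 -exprMn.
apply: (centered_second_moment_ge p_ge0 p1 (incl_prob_gt0 i)
         (design_mean_error_coef i)).
by move=> s; apply: error_coef_notin.
Qed.

End VertexPrior.

Local Open Scope classical_set_scope.

Theorem theorem1 (R : realType) (N : nat) (a b : 'I_N -> R)
  (p : {ffun {set 'I_N} -> R}) (delta : {set 'I_N} -> ('I_N -> R) -> R) :
  (1 <= N)%N ->
  (forall i, 0 < (b i - a i) / 2) ->
  is_design p ->
  (forall i, 0 < incl_prob p i) ->
  is_estimator a b delta ->
  unbiased a b p delta ->
  ((\sum_i ((b i - a i) / 2) ^+ 2 * ((1 - incl_prob p i) / incl_prob p i))%:E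
     <= ereal_sup [set (risk p delta y)%:E | y in [set y | inTheta a b y]])%E.
Proof.
move=> _ r_gt0 p_design pi_gt0 delta_est delta_unbiased.
have ab i : a i <= b i by have := r_gt0 i; lra.
have [e risk_ge] := exists_ge_mean [ffun => true]
  (sum_vertex_risk_ge ab delta_est p_design delta_unbiased pi_gt0).
apply: le_trans (_ : (risk p delta (vertex a b e))%:E <= _)%E.
  by rewrite lee_fin.
by apply: ereal_sup_ubound; exists (vertex a b e); first exact: vertex_inTheta.
Qed.
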